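(* In any $\{K_3,K_4\}$-decomposition of $K_{18}$ with $\alpha=13$, there are $7$ distinct vertices $w_1,\dots,w_7$ with $\alpha_{w_i}=4$ for all $i\in\{1,\dots,7\}$, and at least two of the copies of $K_3$ in the decomposition have all three of their vertices in $\{w_1,\dots,w_7\}$.
   Context: A $\{K_3,K_4\}$-decomposition of $K_v$ is a collection of subgraphs, each isomorphic to $K_3$ or $K_4$ (triples and quadruples), such that every edge of $K_v$ lies in exactly one of them. $\alpha$ is the number of copies of $K_3$ in the decomposition, and for a vertex $x$, $\alpha_x$ is the number of copies of $K_3$ in the decomposition containing $x$. *)

From mathcomp Require Import all_boot.
Set Implicit Arguments. Unset Strict Implicit. Unset Printing Implicit Defensive.

(* A {K3,K4}-decomposition of the complete graph on the vertex set T: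
   a family D of blocks (vertex sets of the copies of K3 / K4), each of size
   3 or 4, such that every edge {x,y} (x <> y) lies in exactly one block. *)
Definition K34_decomposition (T : finType) (D : {set {set T}}) : Prop :=
  (forall B, B \in D -> (#|B| == 3) || (#|B| == 4)) /\
  (forall x y : T, x != y -> #|[set B in D | (x \in B) && (y \in B)]| = 1).

Definition triples (T : finType) (D : {set {set T}}) : {set {set T}} :=
  [set B in D | #|B| == 3].

Definition alpha (T : finType) (D : {set {set T}}) : nat := #|triples D|.

Definition alpha_at (T : finType) (D : {set {set T}}) (x : T) : nat :=
  #|[set B in triples D | x \in B]|.

From mathcomp Require Import all_boot zify.

(* Counting the edges at a vertex x gives 2 alpha_x + 3 beta_x = 17, where
   beta_x counts the K4's through x, so alpha_x is 1, 4 or 7.  Since the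
   alpha_x sum to 3 alpha = 39, there are s = 11 + r vertices with alpha_x = 1
   (the set S), 7 - 2r with alpha_x = 4 and r with alpha_x = 7; counting all
   edges gives 19 K4's.  Counting the pairs inside S, with C(k,2) >= 3k - 6 on
   each K4 and 5s incidences between S and the K4's, leaves only r = 0, or
   r = 1 with no K3 meeting S twice.  The latter is impossible: the seven K3's
   through the vertex with alpha_x = 7 would need seven distinct vertices
   outside S, and there are only five.  So W = {x | alpha_x = 4} has 7
   vertices, the 11 others lie in one K3 each, and at most 11 of the 13 K3's
   leave W. *)

Set Implicit Arguments.
Unset Strict Implicit.
Unset Printing Implicit Defensive.

Lemma double_count (I J : finType) (A : {pred I}) (B : {pred J})
    (R : I -> J -> bool) :
  \sum_(i in A) #|[set j in B | R i j]| = \sum_(j in B) #|[set i in A | R i j]|.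
Proof.
under eq_bigr do rewrite -sum1dep_card.
rewrite (exchange_big_dep (mem B)) => [|i j _ /andP[]//].
apply: eq_bigr => j jB; rewrite -sum1dep_card.
by apply: eq_bigl => i; rewrite [j \in B]jB.
Qed.

Section PairwiseBalanced.
Variables (T : finType) (D : {set {set T}}).
Hypothesis pair_in_unique_block :
  forall x y : T, x != y -> #|[set B in D | (x \in B) && (y \in B)]| = 1.

Lemma card_eq_sum_blocks_through x (Y : {set T}) :
  x \notin Y -> #|Y| = \sum_(B in D | x \in B) #|B :&: Y|.
Proof.
move=> xNY; rewrite -sum1_card.
rewrite (eq_bigr (fun y => #|[set B in D | (x \in B) && (y \in B)]|)); last first.
  by move=> y yY; rewrite pair_in_unique_block //; apply: contraNneq xNY => ->.
rewrite double_count big_mkcondr; apply: eq_bigr => B _.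
case: (x \in B) => /=; last by apply: eq_card0 => y; rewrite !inE andbF.
by apply: eq_card => y; rewrite !inE andbC.
Qed.

Lemma bin2_card_eq_sum_blocks (X : {set T}) :
  'C(#|X|, 2) = \sum_(B in D) 'C(#|B :&: X|, 2).
Proof.
rewrite -cards_draws -sum1_card.
rewrite [LHS](eq_bigr (fun P : {set T} => #|[set B in D | P \subset B]|)); last first.
  move=> P; rewrite inE => /andP[_ /cards2P[x [y [xy ->]]]].
  rewrite -(pair_in_unique_block xy); apply: eq_card => B.
  by rewrite !inE subUset !sub1set.
rewrite double_count; apply: eq_bigr => B _.
by rewrite -cards_draws; apply: eq_card => P; rewrite !inE subsetI andbC andbA.
Qed.

End PairwiseBalanced.

Lemma sum_nat_mem (T : finType) (A : {set T}) : \sum_(y : T) (y \in A : nat) = #|A|.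
Proof. by rewrite -sum1_card [RHS]big_mkcond. Qed.

Lemma sum_card_setI (T : finType) (F : {set {set T}}) (S : {set T}) :
  \sum_(B in F) #|B :&: S| = \sum_(y in S) #|[set B in F | y \in B]|.
Proof.
rewrite -double_count; apply: eq_bigr => B _.
by apply: eq_card => y; rewrite !inE andbC.
Qed.

Lemma card_notsub_le_sum_card_setD (T : finType) (F : {set {set T}})
    (W : {set T}) :
  #|[set B in F | ~~ (B \subset W)]| <= \sum_(B in F) #|B :\: W|.
Proof.
rewrite -sum1dep_card [X in _ <= X]big_mkcond /= big_mkcond /=.
apply: leq_sum => B _; case: (B \in F) => //=.
by case: (boolP (B \subset W)) => //= BW; rewrite lt0n cards_eq0 setD_eq0.
Qed.

Lemma mul3_le_bin2_add6 k : k <= 4 -> 3 * k <= 'C(k, 2) + 6.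
Proof. by case: k => [|[|[|[|[|]]]]]. Qed.

Definition quadruples (T : finType) (D : {set {set T}}) : {set {set T}} :=
  [set B in D | #|B| == 4].

Definition beta_at (T : finType) (D : {set {set T}}) (x : T) : nat :=
  #|[set B in quadruples D | x \in B]|.

Definition alpha_level (T : finType) (D : {set {set T}}) (k : nat) : {set T} :=
  [set x | alpha_at D x == k].

Section Blocks.
Variables (T : finType) (D : {set {set T}}).

Lemma card_triple B : B \in triples D -> #|B| = 3.
Proof. by rewrite inE => /andP[_ /eqP]. Qed.

Lemma card_quadruple B : B \in quadruples D -> #|B| = 4.
Proof. by rewrite inE => /andP[_ /eqP]. Qed.

Lemma sum_alpha_at (S : {set T}) :
  \sum_(y in S) alpha_at D y = \sum_(B in triples D) #|B :&: S|.
Proof. by rewrite sum_card_setI. Qed.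

End Blocks.

Section Decomposition.
Variables (T : finType) (D : {set {set T}}).
Hypothesis decD : K34_decomposition D.

Lemma sum_blocks_cond (P : pred {set T}) (F : {set T} -> nat) :
  \sum_(B in D | P B) F B =
  \sum_(B in triples D | P B) F B + \sum_(B in quadruples D | P B) F B.
Proof.
rewrite (bigID (fun B : {set T} => #|B| == 3)) /=; congr (_ + _); apply: eq_bigl => B.
  by rewrite !inE -!andbA [P B && _]andbC.
rewrite /quadruples !inE; case BD: (B \in D) => //=.
by case/orP: (decD.1 B BD) => /eqP ->; rewrite ?andbF ?andbT.
Qed.

Lemma sum_blocks (F : {set T} -> nat) :
  \sum_(B in D) F B = \sum_(B in triples D) F B + \sum_(B in quadruples D) F B.
Proof. by rewrite -big_condT sum_blocks_cond !big_condT. Qed.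

Lemma alpha_beta_at x : 2 * alpha_at D x + 3 * beta_at D x = #|T|.-1.
Proof.
have := card_eq_sum_blocks_through decD.2 (negbT (setC11 x)).
rewrite cardsC1 sum_blocks_cond => ->.
have cardI (B : {set T}) : x \in B -> #|B :&: [set~ x]| = #|B|.-1.
  by move=> xB; rewrite -setDE (cardsD1 x B) xB.
rewrite (eq_bigr (fun _ => 2)) => [|B /andP[/card_triple B3 xB]]; last first.
  by rewrite cardI ?B3.
rewrite [X in _ = _ + X](eq_bigr (fun _ => 3)) => [|B /andP[/card_quadruple B4 xB]].
  by rewrite !sum_nat_cond_const mulnC [3 * _]mulnC.
by rewrite cardI ?B4.
Qed.

Lemma bin2_card_T : 'C(#|T|, 2) = 3 * alpha D + 6 * #|quadruples D|.
Proof.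
rewrite -cardsT (bin2_card_eq_sum_blocks decD.2) sum_blocks.
rewrite (eq_bigr (fun _ => 3)) => [|B /card_triple B3]; last by rewrite setIT B3.
rewrite [X in _ + X](eq_bigr (fun _ => 6)) => [|B /card_quadruple B4]; last first.
  by rewrite setIT B4.
by rewrite !sum_nat_const mulnC [6 * _]mulnC.
Qed.

Lemma alpha_at_le_card_setD x (S : {set T}) :
    x \notin S -> (forall B, B \in triples D -> x \in B -> #|B :&: S| <= 1) ->
  alpha_at D x <= #|~: S :\ x|.
Proof.
move=> xNS meetS.
rewrite (card_eq_sum_blocks_through decD.2 (negbT (setD11 x (~: S)))) sum_blocks_cond.
apply: leq_trans (leq_addr _ _).
rewrite /alpha_at -sum1dep_card; apply: leq_sum => B /andP[BT xB].
have BS2 : 2 <= #|B :\: S|.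
  by have := cardsID S B; have := meetS B BT xB; rewrite (card_triple BT); lia.
have -> : B :&: (~: S :\ x) = B :\: S :\ x.
  by apply/setP => y; rewrite !inE andbC -andbA.
by move: BS2; rewrite (cardsD1 x (B :\: S)) in_setD xNS xB /=; lia.
Qed.

End Decomposition.

Section Order18.
Variables (T : finType) (D : {set {set T}}).
Hypotheses (decD : K34_decomposition D) (card_T : #|T| = 18) (alpha_D : alpha D = 13).

Lemma alpha_beta_at18 y : 2 * alpha_at D y + 3 * beta_at D y = 17.
Proof. by rewrite alpha_beta_at // card_T. Qed.

Lemma alpha_at_cases y :
  alpha_at D y = 1 \/ alpha_at D y = 4 \/ alpha_at D y = 7.
Proof. by have := alpha_beta_at18 y; lia. Qed.

Lemma sum_alpha_at_all : \sum_y alpha_at D y = 39.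
Proof.
have -> : \sum_y alpha_at D y = \sum_(y in [set: T]) alpha_at D y.
  by apply: eq_bigl => y; rewrite inE.
rewrite sum_alpha_at (eq_bigr (fun _ => 3)) => [|B /card_triple B3].
  by rewrite sum_nat_const -/(alpha D) alpha_D.
by rewrite setIT B3.
Qed.

Lemma card_alpha_levels :
  #|alpha_level D 1| + #|alpha_level D 4| + #|alpha_level D 7| = 18 /\
  #|alpha_level D 1| + 4 * #|alpha_level D 4| + 7 * #|alpha_level D 7| = 39.
Proof.
split.
  rewrite -!sum_nat_mem -card_T -sum1_card -!big_split; apply: eq_bigr => y _.
  by rewrite !inE; case: (alpha_at_cases y) => [|[|]] ->.
rewrite -sum_alpha_at_all -!sum_nat_mem !big_distrr -!big_split; apply: eq_bigr => y _.
by rewrite !inE; case: (alpha_at_cases y) => [|[|]] ->.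
Qed.

Lemma card_quadruples : #|quadruples D| = 19.
Proof. by have := bin2_card_T decD; rewrite card_T alpha_D bin2 /=; lia. Qed.

Lemma beta_at_level1 y : y \in alpha_level D 1 -> beta_at D y = 5.
Proof. by rewrite inE => /eqP a1; have := alpha_beta_at18 y; lia. Qed.

Lemma level1_pair_bound :
  15 * #|alpha_level D 1| + \sum_(B in triples D) 'C(#|B :&: alpha_level D 1|, 2)
    <= 'C(#|alpha_level D 1|, 2) + 114.
Proof.
set S := alpha_level D 1.
rewrite (bin2_card_eq_sum_blocks decD.2 S) (sum_blocks decD).
have quad_incidences : \sum_(B in quadruples D) #|B :&: S| = 5 * #|S|.
  rewrite sum_card_setI (eq_bigr (fun _ => 5)) => [|y]; last exact: beta_at_level1.
  by rewrite sum_nat_const mulnC.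
have quad_pairs :
    3 * \sum_(B in quadruples D) #|B :&: S|
      <= \sum_(B in quadruples D) 'C(#|B :&: S|, 2) + 114.
  rewrite -[114]/(19 * 6) -card_quadruples -sum_nat_const -big_split big_distrr /=.
  apply: leq_sum => B QB; apply: mul3_le_bin2_add6.
  by rewrite -(card_quadruple QB) subset_leq_card ?subsetIl.
lia.
Qed.

Lemma card_alpha_level7_le1 :
  #|alpha_level D 7| = 0 \/
  #|alpha_level D 7| = 1 /\ \sum_(B in triples D) 'C(#|B :&: alpha_level D 1|, 2) = 0.
Proof.
have := level1_pair_bound.
have [-> r_le3] :
    #|alpha_level D 1| = 11 + #|alpha_level D 7| /\ #|alpha_level D 7| <= 3.
  by have := card_alpha_levels; lia.
by move: r_le3; case: #|alpha_level D 7| => [|[|[|[|r]]]] //= _; rewrite bin2 /=; lia.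
Qed.

Lemma card_alpha_level7 : #|alpha_level D 7| = 0.
Proof.
case: card_alpha_level7_le1 => [//|[r1 e0]].
set S := alpha_level D 1.
have [x] : exists x, x \in alpha_level D 7 by apply/card_gt0P; rewrite r1.
rewrite inE => /eqP ax.
have xNS : x \notin S by rewrite inE ax.
have meetS B : B \in triples D -> x \in B -> #|B :&: S| <= 1.
  move=> BT _; move/eqP: e0; rewrite sum_nat_eq0 => /forall_inP/(_ B BT).
  by rewrite eqn0Ngt bin_gt0 -ltnNge.
have := alpha_at_le_card_setD decD xNS meetS.
have := cardsD1 x (~: S); have := cardsC S; rewrite card_T in_setC xNS ax.
by have := card_alpha_levels; rewrite /S /=; lia.
Qed.

Lemma card_alpha_level4 : #|alpha_level D 4| = 7.
Proof. by have := card_alpha_levels; rewrite card_alpha_level7; lia. Qed.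

Lemma card_triples_sub_level4 :
  2 <= #|[set B in triples D | B \subset alpha_level D 4]|.
Proof.
set W := alpha_level D 4.
have notW : ~: W = alpha_level D 1.
  apply/setP => y; have /setP/(_ y) := cards0_eq card_alpha_level7.
  by rewrite !inE; case: (alpha_at_cases y) => [|[|]] ->.
have outside : #|[set B in triples D | ~~ (B \subset W)]| <= 11.
  apply: leq_trans (card_notsub_le_sum_card_setD _ W) _.
  rewrite (eq_bigr (fun B => #|B :&: ~: W|)) => [|B _]; last by rewrite setDE.
  rewrite -sum_alpha_at notW (eq_bigr (fun _ => 1)) => [|y]; last by rewrite inE => /eqP.
  by rewrite sum1_card; have := card_alpha_levels; rewrite card_alpha_level7; lia.
have total : #|[set B in triples D | B \subset W]|
               + #|[set B in triples D | ~~ (B \subset W)]| = 13.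
  by rewrite -!sum1dep_card -bigID sum1_card.
lia.
Qed.

End Order18.

Theorem mainTheorem10 (D : {set {set 'I_18}}) :
  K34_decomposition D -> alpha D = 13 ->
  exists W : {set 'I_18},
    [/\ #|W| = 7,
        (forall w, w \in W -> alpha_at D w = 4) &
        2 <= #|[set B in triples D | B \subset W]| ].
Proof.
move=> decD alpha_D; have card_T : #|'I_18| = 18 by rewrite card_ord.
exists (alpha_level D 4); split.
- exact: card_alpha_level4 decD card_T alpha_D.
- by move=> w; rewrite inE => /eqP.
- exact: card_triples_sub_level4 decD card_T alpha_D.
Qed.
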